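(* In the setting of the context, let $\bm s,\bm s'\in\mathcal S$ be starting magnetizations with $\bm s\ge\bm s'$ entrywise. Then for every $t\ge0$, entrywise, \[ \mathbf 0\le\big(\mathbb E_{\bm s}S^{(i)}_t-\mathbb E_{\bm s'}S^{(i)}_t\big)_{i=1}^m\le\mathbf Q_n^t(\bm s-\bm s'), \] where $\mathbb E_{\bm s}$ denotes expectation for the magnetization chain started at $\bm s$.
   Context: Fix $m\ge1$, proportions $p_1,\dots,p_m>0$ with $\sum_ip_i=1$, a symmetric matrix $\mathbf K=(k_{ij})$ with all $k_{ij}>0$, and $\beta\ge0$; $n$ is a positive integer with $np_i\in\mathbb N$. The vertex set $V=\{1,\dots,n\}$ is partitioned into blocks $G_1,\dots,G_m$ with $|G_i|=np_i$; for $v\in G_i,w\in G_j$ put $K(v,w)=k_{ij}/n$. The Glauber dynamics $(\sigma_t)$ on $\Omega=\{-1,+1\}^V$ picks at each step a uniform random vertex $v$ and sets its spin to $\pm1$ with probability $\frac{1\pm\tanh(\beta S^v)}2$, $S^v=\sum_{w\ne v}K(v,w)\sigma(w)$. The magnetization chain is $\bm S_t=(S_t^{(1)},\dots,S_t^{(m)})$ with $S_t^{(i)}=\frac1n\sum_{v\in G_i}\sigma_t(v)$; it is a Markov chain on $\mathcal S=\prod_i\{-p_i,-p_i+2/n,\dots,p_i\}$. Let $\mathbf B=(p_ik_{ij})$ and $\mathbf Q_n=(1-\frac1n)\mathbf I_m+\frac\beta n\mathbf B$. *)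

From mathcomp Require Import all_boot all_order all_algebra.
From mathcomp Require Import reals sequences exp.
Set Implicit Arguments. Unset Strict Implicit. Unset Printing Implicit Defensive.
Import Order.TTheory GRing.Theory Num.Theory.
Local Open Scope ring_scope.

Definition tanhR {R : realType} (x : R) : R :=
  (expR x - expR (- x)) / (expR x + expR (- x)).

(* spin configurations on V = 'I_n : true = +1, false = -1 *)
Definition config (n : nat) := {ffun 'I_n -> bool}.
Definition spin {R : realType} (b : bool) : R := if b then 1 else -1.

Definition upd n (sigma : config n) (v : 'I_n) (b : bool) : config n :=
  [ffun w => if w == v then b else sigma w].

(* interaction K(v,w) = k_{ij}/n for v in G_i, w in G_j; blk v = block of v *)
Definition Kint {R : realType} m n (k : 'M[R]_m) (blk : 'I_n -> 'I_m)
  (v w : 'I_n) : R := k (blk v) (blk w) / n%:R.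

Definition locfield {R : realType} m n (k : 'M[R]_m) (blk : 'I_n -> 'I_m)
  (sigma : config n) (v : 'I_n) : R :=
  \sum_(w < n | w != v) Kint k blk v w * spin (sigma w).

Definition glauberP {R : realType} m n (k : 'M[R]_m) (blk : 'I_n -> 'I_m)
  (beta : R) (sigma tau : config n) : R :=
  n%:R^-1 * \sum_(v < n)
    ( (tau == upd sigma v true)%:R * ((1 + tanhR (beta * locfield k blk sigma v)) / 2)
    + (tau == upd sigma v false)%:R * ((1 - tanhR (beta * locfield k blk sigma v)) / 2)).

Fixpoint glauberPt {R : realType} m n (k : 'M[R]_m) (blk : 'I_n -> 'I_m)
  (beta : R) (t : nat) (sigma tau : config n) : R :=
  match t with
  | 0 => (sigma == tau)%:R
  | t'.+1 => \sum_(rho : config n)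
               glauberPt k blk beta t' sigma rho * glauberP k blk beta rho tau
  end.

Definition magn {R : realType} m n (blk : 'I_n -> 'I_m) (sigma : config n)
  (i : 'I_m) : R :=
  n%:R^-1 * \sum_(v < n | blk v == i) spin (sigma v).

Definition expMagn {R : realType} m n (k : 'M[R]_m) (blk : 'I_n -> 'I_m)
  (beta : R) (sigma : config n) (t : nat) (i : 'I_m) : R :=
  \sum_(tau : config n) glauberPt k blk beta t sigma tau * magn blk tau i.

Definition Qn {R : realType} m (n : nat) (p : 'I_m -> R) (k : 'M[R]_m)
  (beta : R) : 'M[R]_m :=
  \matrix_(i, j) ((i == j)%:R * (1 - n%:R^-1) + beta / n%:R * (p i * k i j)).

Definition mxpow {R : realType} m (A : 'M[R]_m) (t : nat) : 'M[R]_m :=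
  iter t (fun M => A *m M) 1%:M.

From Pilot Require Import Defs.
From mathcomp Require Import all_boot all_order all_algebra.
From mathcomp Require Import reals sequences exp.
From mathcomp Require Import functions normedtype derive.
From mathcomp Require Import fingroup perm.
From mathcomp Require Import ring lra.
Import Order.TTheory GRing.Theory Num.Theory.
Import numFieldNormedType.Exports.
Set Implicit Arguments. Unset Strict Implicit. Unset Printing Implicit Defensive.
Local Open Scope ring_scope.

(* Order configurations sitewise. If s' <= s then every local field, hence every
   up-probability of the heat-bath update, is larger at s, so one step of the two
   chains can be coupled monotonically: increments of E_s F along the order are
   then dominated by those of E_s H whenever the increments of F are dominated by
   those of H. After one step the expected block magnetization is exactly
   (1 - 1/n) S^(j) + n^-2 sum_(v in G_j) tanh (beta S^v), and since tanh is
   1-Lipschitz its increments are dominated by those of Q_n S; induction on t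
   gives the bound. Finally the dynamics commutes with block-preserving
   relabelings of the sites, and when the block magnetizations are ordered, one
   such relabeling makes the two configurations ordered sitewise. *)

Section Tanh.
Variable R : realType.
Implicit Types x y z : R.

Lemma tanhRE x : tanhR x = (expR x ^+ 2 - 1) / (expR x ^+ 2 + 1).
Proof.
rewrite /tanhR expRN; have ex := expR_gt0 x.
have ex0 : expR x != 0 by rewrite gt_eqF.
have ex2 : expR x ^+ 2 + 1 != 0 by rewrite gt_eqF // addr_gt0 // exprn_gt0.
have exV : expR x + (expR x)^-1 != 0 by rewrite gt_eqF // addr_gt0 // invr_gt0.
by field; rewrite ex0 ex2.
Qed.

Lemma tanhR_itv x : -1 <= tanhR x <= 1.
Proof.
rewrite tanhRE; have X0 : 0 <= expR x ^+ 2 by rewrite exprn_ge0 // ltW // expR_gt0.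
have d0 : 0 < expR x ^+ 2 + 1 by lra.
by rewrite ler_pdivlMr // ler_pdivrMr //; apply/andP; split; lra.
Qed.

Lemma ler_tanhR x y : x <= y -> tanhR x <= tanhR y.
Proof.
rewrite -ler_expR !tanhRE => le_exy.
have ex := expR_gt0 x; have ey := expR_gt0 y.
have le_exy2 : expR x ^+ 2 <= expR y ^+ 2 by rewrite ler_pXn2r // ?nnegrE ltW.
have dx : 0 < expR x ^+ 2 + 1 by rewrite addr_gt0 // exprn_gt0.
have dy : 0 < expR y ^+ 2 + 1 by rewrite addr_gt0 // exprn_gt0.
rewrite ler_pdivrMr // mulrAC ler_pdivlMr //; nra.
Qed.

(* Equivalently tanh (z/2) <= z/2; the derivative of the difference is
   1 - (1 - z) e^z >= 0. *)
Lemma expR_sub1_le z : 0 <= z -> 2 * (expR z - 1) <= z * (expR z + 1).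
Proof.
move=> z0; pose j : R -> R := (id * (expR + cst 1) - cst 2 * (expR - cst 1))%R.
have dj (t : R) : is_derive t 1 j (1 - (1 - t) * expR t).
  apply: is_derive_eq; rewrite /GRing.scale /= /cst /=.
  change (t * (expR t + 0) + (expR t + 1) * 1 - (2 * (expR t - 0) + (expR t - 1) * 0) =
    1 - (1 - t) * expR t); ring.
have dj_able (t : R) : derivable j t 1 by case: (dj t).
have [c _ jzE] := MVT_segment z0 (fun x _ => dj x)
  (derivable_within_continuous (i := `[0, z]%R) (fun x _ => dj_able x)).
have jE t : j t = t * (expR t + 1) - 2 * (expR t - 1) by [].
suff : 0 <= j z - j 0 by rewrite !jE expR0; lra.
rewrite jzE subr0 mulr_ge0 // subr_ge0.
have := expR_ge1Dx (- c); rewrite expRN => /(ler_wpM2r (ltW (expR_gt0 c))).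
by rewrite mulVf ?gt_eqF ?expR_gt0 // addrC.
Qed.

Lemma tanhR_lipschitz x y : y <= x -> tanhR x - tanhR y <= x - y.
Proof.
move=> le_yx; have u0 : 0 <= x - y by lra.
have exE : expR (x - y) * expR y = expR x by rewrite -expRD subrK.
have logmean : 2 * (expR x - expR y) <= (x - y) * (expR x + expR y).
  have := ler_wpM2r (ltW (expR_gt0 y)) (expR_sub1_le u0).
  by rewrite -exE; lra.
rewrite !tanhRE; have ex := expR_gt0 x; have ey := expR_gt0 y.
move: logmean; set X := expR x; set Y := expR y => logmean.
have dx : 0 < X ^+ 2 + 1 by rewrite addr_gt0 // exprn_gt0.
have dy : 0 < Y ^+ 2 + 1 by rewrite addr_gt0 // exprn_gt0.
have -> : (X ^+ 2 - 1) / (X ^+ 2 + 1) - (Y ^+ 2 - 1) / (Y ^+ 2 + 1)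
    = (2 * (X - Y)) * (X + Y) / ((X ^+ 2 + 1) * (Y ^+ 2 + 1)).
  by field; rewrite !gt_eqF.
rewrite ler_pdivrMr ?mulr_gt0 //.
have cs : (X + Y) ^+ 2 <= (X ^+ 2 + 1) * (Y ^+ 2 + 1).
  have : 0 <= (X * Y - 1) ^+ 2 by rewrite sqr_ge0.
  lra.
apply: (le_trans (ler_wpM2r (ltW (addr_gt0 ex ey)) logmean)).
by rewrite -mulrA -expr2; apply: ler_wpM2l.
Qed.

End Tanh.

Lemma sumr_indicator (R : pzRingType) (T : finType) (P : pred T) (G : T -> R) :
  \sum_t (P t)%:R * G t = \sum_(t | P t) G t.
Proof.
by rewrite [RHS]big_mkcond; apply: eq_bigr => t _; case: (P t); rewrite ?mul1r ?mul0r.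
Qed.

Lemma sumr_delta (R : pzRingType) (T : finType) (x : T) (G : T -> R) :
  \sum_t (t == x)%:R * G t = G x.
Proof. by rewrite sumr_indicator big_pred1_eq. Qed.

Lemma ler_spin (R : realType) (b' b : bool) : (b' -> b) -> spin b' <= spin b :> R.
Proof. by case: b' b => -[] //= => [/(_ isT) | _] //; lra. Qed.

Definition mix (R : pzRingType) (a : R) (g : bool -> R) := a * g true + (1 - a) * g false.

(* The monotone coupling of two Bernoulli variables with parameters a' <= a. *)
Lemma mix_incr (R : realFieldType) (a' a : R) (f' f h' h : bool -> R) :
  0 <= a' <= a -> a <= 1 ->
  (forall b' b : bool, (b' -> b) -> 0 <= f b - f' b' <= h b - h' b') ->
  0 <= mix a f - mix a' f' <= mix a h - mix a' h'.
Proof.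
move=> /andP[a'0 le_a'a] a1 fh.
have mixB g' g : mix a g - mix a' g' =
    a' * (g true - g' true) + (a - a') * (g true - g' false) + (1 - a) * (g false - g' false).
  by rewrite /mix; ring.
have /andP[t0 tt] := fh true true id.
have /andP[f0 ft] := fh false true (fun _ => isT).
have /andP[ff0 ff] := fh false false id.
rewrite !mixB; apply/andP; split.
  by rewrite !addr_ge0 // mulr_ge0 // subr_ge0.
by rewrite !lerD // ler_wpM2l // subr_ge0.
Qed.

Lemma mxpowSr (R : realType) m (A : 'M[R]_m) t : mxpow A t.+1 = mxpow A t *m A.
Proof.
elim: t => [|t IH]; first by rewrite /= mulmx1 mul1mx.
by rewrite /mxpow iterS -/(mxpow A t.+1) [in LHS]IH mulmxA.
Qed.

Lemma mxpow_ge0 (R : realType) m (A : 'M[R]_m) t :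
  (forall i j, 0 <= A i j) -> forall i j, 0 <= mxpow A t i j.
Proof.
move=> A_ge0; elim: t => [|t IH] i j /=; first by rewrite mxE ler0n.
by rewrite mxE sumr_ge0 // => l _; rewrite mulr_ge0.
Qed.

Section Glauber.
Variables (R : realType) (m n : nat) (k : 'M[R]_m) (beta : R) (blk : 'I_n -> 'I_m).

Implicit Types (s r tau rho : config n) (v w : 'I_n).

Local Notation P := (glauberP k blk beta).
Local Notation Pt := (glauberPt k blk beta).
Local Notation magn := (@magn R m n blk).
Local Notation expMagn := (expMagn k blk beta).

Definition stepE (F : config n -> R) (s : config n) : R := \sum_tau P s tau * F tau.

Definition up_prob (s : config n) (v : 'I_n) : R :=
  (1 + tanhR (beta * locfield k blk s v)) / 2.

Lemma stepE_mix F s :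
  stepE F s = n%:R^-1 * \sum_v mix (up_prob s v) (fun b => F (upd s v b)).
Proof.
rewrite /stepE /glauberP.
under eq_bigr do rewrite -mulrA mulr_suml.
rewrite -mulr_sumr exchange_big /=; congr (_ * _); apply: eq_bigr => v _.
under eq_bigr do rewrite mulrDl -!mulrA.
by rewrite big_split /= !sumr_delta /mix /up_prob; field.
Qed.

Lemma glauberPtSl t s tau : Pt t.+1 s tau = \sum_rho P s rho * Pt t rho tau.
Proof.
have PtS u r r' : Pt u.+1 r r' = \sum_rho Pt u r rho * P rho r' by [].
elim: t s tau => [|t IH] s tau; rewrite PtS.
  under [LHS]eq_bigr do rewrite /= eq_sym.
  under [RHS]eq_bigr do rewrite mulrC.
  by rewrite !sumr_delta.
under eq_bigr do rewrite IH mulr_suml.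
rewrite exchange_big /=; apply: eq_bigr => mu _.
by rewrite mulr_sumr; apply: eq_bigr => rho _; rewrite mulrA.
Qed.

Lemma expMagnS s t i : expMagn s t.+1 i = stepE (fun r => expMagn r t i) s.
Proof.
rewrite /expMagn /stepE.
under eq_bigr do rewrite glauberPtSl mulr_suml.
rewrite exchange_big /=; apply: eq_bigr => rho _.
by rewrite mulr_sumr; apply: eq_bigr => tau _; rewrite mulrA.
Qed.

Lemma magn_upd s v b j :
  magn (upd s v b) j = magn s j + n%:R^-1 * ((blk v == j)%:R * (spin b - spin (s v))).
Proof.
rewrite /Defs.magn -mulrDr; congr (_ * _).
have updE w : w != v -> upd s v b w = s w by rewrite ffunE => /negbTE ->.
have [<-|ne_vj] := eqVneq (blk v) j; last first.
  rewrite mul0r addr0; apply: eq_bigr => w /eqP blk_w.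
  by rewrite updE //; apply: contra_neq ne_vj => <-.
rewrite (bigD1 v) //= [in RHS](bigD1 v) //= ffunE eqxx mul1r.
rewrite (eq_bigr (fun w => spin (s w))); first by lra.
by move=> w /andP[_ ne_wv]; rewrite updE.
Qed.

Definition config_le (s' s : config n) := forall v, s' v -> s v.

Lemma config_le_upd s' s v (b' b : bool) :
  config_le s' s -> (b' -> b) -> config_le (upd s' v b') (upd s v b).
Proof.
by move=> le_s le_b w; rewrite !ffunE; case: (w == v); [apply: le_b | apply: le_s].
Qed.

Lemma config_le_magn s' s j : config_le s' s -> magn s' j <= magn s j.
Proof.
move=> le_s; rewrite ler_wpM2l ?invr_ge0 // ler_sum // => v _.
exact/ler_spin/le_s.
Qed.

Definition relabel (pi : {perm 'I_n}) (s : config n) : config n := [ffun v => s (pi v)].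

Lemma relabel_inj pi : injective (relabel pi).
Proof.
move=> s1 s2 /ffunP eq_s; apply/ffunP => u.
by have := eq_s (pi^-1 u)%g; rewrite !ffunE permKV.
Qed.

Lemma relabelM (pi1 pi2 : {perm 'I_n}) s :
  relabel pi1 (relabel pi2 s) = relabel (pi1 * pi2)%g s.
Proof. by apply/ffunP => v; rewrite !ffunE permM. Qed.

Section Relabel.
Variables (pi : {perm 'I_n}) (pi_blk : forall v, blk (pi v) = blk v).

Lemma magn_relabel s j : magn (relabel pi s) j = magn s j.
Proof.
rewrite /Defs.magn; congr (_ * _); rewrite [RHS](reindex_inj (@perm_inj _ pi)) /=.
by apply: eq_big => [v|v _]; rewrite ?pi_blk ?ffunE.
Qed.

Lemma locfield_relabel s v : locfield k blk (relabel pi s) v = locfield k blk s (pi v).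
Proof.
rewrite /locfield [RHS](reindex_inj (@perm_inj _ pi)) /=.
apply: eq_big => [w|w _]; first by rewrite (inj_eq (@perm_inj _ pi)).
by rewrite ffunE /Kint !pi_blk.
Qed.

Lemma upd_relabel s v b : upd (relabel pi s) v b = relabel pi (upd s (pi v) b).
Proof. by apply/ffunP => w; rewrite !ffunE (inj_eq (@perm_inj _ pi)). Qed.

Lemma glauberP_relabel s tau : P (relabel pi s) (relabel pi tau) = P s tau.
Proof.
rewrite /glauberP; congr (_ * _); rewrite [RHS](reindex_inj (@perm_inj _ pi)) /=.
by apply: eq_bigr => v _; rewrite !upd_relabel !(inj_eq (@relabel_inj pi)) locfield_relabel.
Qed.

Lemma glauberPt_relabel t s tau : Pt t (relabel pi s) (relabel pi tau) = Pt t s tau.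
Proof.
elim: t s tau => [|t IH] s tau /=; first by rewrite (inj_eq (@relabel_inj pi)).
rewrite [LHS](reindex_inj (@relabel_inj pi)) /=.
by apply: eq_bigr => rho _; rewrite IH glauberP_relabel.
Qed.

Lemma expMagn_relabel s t i : expMagn (relabel pi s) t i = expMagn s t i.
Proof.
rewrite /Defs.expMagn [LHS](reindex_inj (@relabel_inj pi)) /=.
by apply: eq_bigr => tau _; rewrite glauberPt_relabel magn_relabel.
Qed.

End Relabel.

Lemma exists_block_swap s' s v :
  s' v -> ~~ s v -> magn s' (blk v) <= magn s (blk v) ->
  exists2 w, blk w = blk v & s w && ~~ s' w.
Proof.
move=> s'v sNv le_magn.
have [/existsP[w /and3P[/eqP bw sw s'Nw]]|/existsPn noswap] :=
  boolP [exists w, [&& blk w == blk v, s w & ~~ s' w]]; first by exists w; rewrite ?sw.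
have n_gt0 : (0 < n)%N := leq_ltn_trans (leq0n v) (ltn_ord v).
exfalso; move: le_magn; apply/negP; rewrite -ltNge /Defs.magn ltr_pM2l ?invr_gt0 ?ltr0n //.
rewrite (bigD1 v) //= [X in _ < X](bigD1 v) //= s'v (negbTE sNv) /=.
apply: ltr_leD; first by lra.
apply: ler_sum => w /andP[bw _]; apply: ler_spin => sw.
by have := noswap w; rewrite bw sw /= negbK.
Qed.

(* Induction on the number of sites where s' is up and s is down: swap one of
   them with a site of the same block where s is up and s' is down. *)
Lemma exists_relabel_config_le s' s : (forall j, magn s' j <= magn s j) ->
  exists2 pi : {perm 'I_n}, (forall v, blk (pi v) = blk v) & config_le (relabel pi s') s.
Proof.
pose d r := #|[set v | r v && ~~ s v]|.
have [N lt_dN] := ubnP (d s'); elim: N s' lt_dN => // N IH s' lt_dN le_magn.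
have [/existsP[v /andP[s'v sNv]]|/existsPn agree] :=
  boolP [exists v, s' v && ~~ s v]; last first.
  exists 1%g => v; rewrite ?ffunE perm1 // => s'v.
  by have := agree v; rewrite s'v negbK.
have [w bw /andP[sw s'Nw]] := exists_block_swap s'v sNv (le_magn (blk v)).
pose swap := tperm v w.
have swap_blk u : blk (swap u) = blk u by rewrite /swap; case: tpermP => [->|->|].
have lt_d : (d (relabel swap s') < d s')%N.
  apply/proper_card/properP; split.
    apply/subsetP => u; rewrite !inE ffunE /swap.
    by case: tpermP => [->|->|//]; rewrite ?(negbTE s'Nw) ?sw ?andbF.
  by exists v; rewrite !inE ?s'v ?sNv // ffunE tpermL (negbTE s'Nw).
have le_magn_swap j : magn (relabel swap s') j <= magn s j by rewrite magn_relabel.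
have [pi pi_blk le_pi] := IH _ (leq_trans lt_d lt_dN) le_magn_swap.
by exists (pi * swap)%g => [u|]; rewrite ?permM ?swap_blk // -relabelM.
Qed.

Section Monotone.
Hypotheses (k_ge0 : forall i j, 0 <= k i j) (beta_ge0 : 0 <= beta).

Lemma locfield_incr s' s v : config_le s' s ->
  0 <= locfield k blk s v - locfield k blk s' v <=
    \sum_l k (blk v) l * (magn s l - magn s' l).
Proof.
move=> le_s; rewrite /locfield -sumrB.
have incr_w w : 0 <= Kint k blk v w * spin (s w) - Kint k blk v w * spin (s' w).
  by rewrite -mulrBr mulr_ge0 ?divr_ge0 // subr_ge0; apply/ler_spin/le_s.
apply/andP; split; first exact: sumr_ge0.
apply: (le_trans (y := \sum_w (Kint k blk v w * spin (s w) - Kint k blk v w * spin (s' w)))).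
  by rewrite [X in _ <= X](bigD1 v) //= lerDr.
rewrite (partition_big blk predT) //=; apply: ler_sum => l _.
rewrite /Defs.magn -mulrBr -sumrB !mulr_sumr; apply: ler_sum => w /eqP blk_w.
by rewrite /Kint blk_w -mulrBr mulrA mulrC mulrA [_ * k _ _]mulrC.
Qed.

Lemma up_prob_itv s v : 0 <= up_prob s v <= 1.
Proof. by have := tanhR_itv (beta * locfield k blk s v); rewrite /up_prob; lra. Qed.

Lemma up_prob_le s' s v : config_le s' s -> up_prob s' v <= up_prob s v.
Proof.
move=> le_s; suff : tanhR (beta * locfield k blk s' v) <= tanhR (beta * locfield k blk s v).
  by rewrite /up_prob; lra.
apply/ler_tanhR/ler_wpM2l => //.
by have /andP[+ _] := locfield_incr v le_s; rewrite subr_ge0.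
Qed.

Definition incr_dominated (F H : config n -> R) :=
  forall s' s, config_le s' s -> 0 <= F s - F s' <= H s - H s'.

Lemma stepE_incr_dominated F H : incr_dominated F H -> incr_dominated (stepE F) (stepE H).
Proof.
move=> FH s' s le_s; rewrite !stepE_mix -!mulrBr -!sumrB.
pose M G r v := mix (up_prob r v) (fun b => G (upd r v b)).
have M_incr v : 0 <= M F s v - M F s' v <= M H s v - M H s' v.
  have /andP[a'0 _] := up_prob_itv s' v; have /andP[_ a1] := up_prob_itv s v.
  apply: mix_incr => [|//|b' b le_b]; first by rewrite a'0 up_prob_le.
  exact/FH/config_le_upd.
apply/andP; split.
  by rewrite mulr_ge0 ?invr_ge0 // sumr_ge0 // => v _; case/andP: (M_incr v).
by rewrite ler_wpM2l ?invr_ge0 // ler_sum // => v _; case/andP: (M_incr v).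
Qed.

Section Drift.
Variable p : 'I_m -> R.
Hypotheses (p_ge0 : forall i, 0 <= p i) (n_gt0 : (0 < n)%N)
  (card_blk : forall i, (#|[set v | blk v == i]|)%:R = n%:R * p i).

Local Notation Q := (Qn n p k beta).

Lemma sumr_block_const j (c : R) : \sum_(v | blk v == j) c = n%:R * p j * c.
Proof. by rewrite sumr_const -card_blk cardsE mulr_natl. Qed.

Definition magnv s : 'cV[R]_m := \col_j magn s j.

Lemma stepE_mulmx (A : 'M[R]_m) i s :
  stepE (fun r => (A *m magnv r) i 0) s = \sum_j A i j * stepE (magn^~ j) s.
Proof.
rewrite /stepE; under eq_bigr do rewrite mxE mulr_sumr.
rewrite exchange_big; apply: eq_bigr => j _.
by rewrite mulr_sumr; apply: eq_bigr => tau _; rewrite mxE mulrCA.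
Qed.

Lemma stepE_magn s j :
  stepE (magn^~ j) s = (1 - n%:R^-1) * magn s j +
    n%:R^-2 * \sum_(v | blk v == j) tanhR (beta * locfield k blk s v).
Proof.
have n0 : n%:R != 0 :> R by rewrite pnatr_eq0 -lt0n.
have mixE v : mix (up_prob s v) (fun b => magn (upd s v b) j) =
    magn s j + n%:R^-1 * ((blk v == j)%:R * tanhR (beta * locfield k blk s v))
    - n%:R^-1 * ((blk v == j)%:R * spin (s v)).
  by rewrite /mix !magn_upd /up_prob /=; field.
rewrite stepE_mix; under eq_bigr do rewrite mixE.
rewrite sumrB big_split /= sumr_const card_ord -!mulr_sumr !sumr_indicator.
have -> : \sum_(v | blk v == j) spin (s v) = n%:R * magn s j.
  by rewrite /Defs.magn mulrA divff // mul1r.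
by rewrite -mulr_natr; field.
Qed.

Lemma Qn_magnv r j : (Q *m magnv r) j 0 =
  (1 - n%:R^-1) * magn r j + beta / n%:R * p j * \sum_l k j l * magn r l.
Proof.
rewrite mxE; under eq_bigr do rewrite !mxE mulrDl.
rewrite big_split /=; congr (_ + _).
  by under eq_bigr do rewrite -mulrA eq_sym; rewrite sumr_delta.
by rewrite mulr_sumr; apply: eq_bigr => l _; rewrite !mulrA.
Qed.

Lemma stepE_magn_incr s' s j : config_le s' s ->
  stepE (magn^~ j) s - stepE (magn^~ j) s' <= (Q *m magnv s) j 0 - (Q *m magnv s') j 0.
Proof.
move=> le_s; rewrite !stepE_magn !Qn_magnv.
set T := \sum_l k j l * (magn s l - magn s' l).
have tanh_incr : \sum_(v | blk v == j) tanhR (beta * locfield k blk s v)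
    - \sum_(v | blk v == j) tanhR (beta * locfield k blk s' v) <= n%:R * p j * (beta * T).
  rewrite -sumrB -sumr_block_const.
  apply: ler_sum => v /eqP blk_v; have /andP[l0 lT] := locfield_incr v le_s.
  apply: le_trans (tanhR_lipschitz _) _; first by rewrite ler_wpM2l // -subr_ge0.
  by rewrite -mulrBr ler_wpM2l // /T -blk_v.
have TE : T = \sum_l k j l * magn s l - \sum_l k j l * magn s' l.
  by rewrite -sumrB; apply: eq_bigr => l _; rewrite mulrBr.
have n2_ge0 : 0 <= n%:R^-2 :> R by rewrite invr_ge0 exprn_ge0.
have := ler_wpM2l n2_ge0 tanh_incr.
have -> : n%:R^-2 * (n%:R * p j * (beta * T)) = beta / n%:R * p j * T.
  by field; rewrite pnatr_eq0 -lt0n.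
rewrite TE; lra.
Qed.

Lemma Qn_ge0 i j : 0 <= Q i j.
Proof.
by rewrite mxE addr_ge0 ?mulr_ge0 ?invr_ge0 // subr_ge0 invf_le1 ?ltr0n // ler1n.
Qed.

Lemma expMagn0 s i : expMagn s 0 i = magn s i.
Proof. by rewrite /Defs.expMagn; under eq_bigr do rewrite /= eq_sym; rewrite sumr_delta. Qed.

Lemma expMagn_incr_dominated t i :
  incr_dominated (fun r => expMagn r t i) (fun r => (mxpow Q t *m magnv r) i 0).
Proof.
elim: t i => [|t IH] i s' s le_s.
  by rewrite !expMagn0 /= !mul1mx !mxE lexx subr_ge0 config_le_magn.
have /andP[lo hi] := stepE_incr_dominated (IH i) le_s.
rewrite !expMagnS lo; apply: le_trans hi _.
rewrite !stepE_mulmx mxpowSr -!mulmxA !mxE -!sumrB ler_sum // => j _.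
by rewrite -!mulrBr ler_wpM2l ?mxpow_ge0 ?stepE_magn_incr //; apply: Qn_ge0.
Qed.

End Drift.
End Monotone.
End Glauber.

Theorem lemma4p8 (R : realType) (m : nat) (p : 'I_m -> R) (k : 'M[R]_m)
  (beta : R) (n : nat) (blk : 'I_n -> 'I_m) :
  (0 < m)%N ->
  (forall i, 0 < p i) -> \sum_(i < m) p i = 1 ->
  (forall i j, k i j = k j i) -> (forall i j, 0 < k i j) ->
  0 <= beta ->
  (0 < n)%N ->
  (forall i, (#|[set v | blk v == i]|)%:R = n%:R * p i) ->
  forall sigma sigma' : config n,
  (forall i, magn (R:=R) blk sigma' i <= magn (R:=R) blk sigma i) ->
  forall (t : nat) (i : 'I_m),
    0 <= expMagn k blk beta sigma t i - expMagn k blk beta sigma' t i /\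
    expMagn k blk beta sigma t i - expMagn k blk beta sigma' t i <=
      (mxpow (Qn n p k beta) t *m \col_j (magn (R:=R) blk sigma j - magn (R:=R) blk sigma' j)) i 0.
Proof.
move=> _ p_gt0 _ _ k_gt0 beta_ge0 n_gt0 card_blk sigma sigma' le_magn t i.
have [pi pi_blk le_pi] := exists_relabel_config_le le_magn.
have k_ge0 i' j' := ltW (k_gt0 i' j'); have p_ge0 i' := ltW (p_gt0 i').
have /andP[] := expMagn_incr_dominated k_ge0 beta_ge0 p_ge0 n_gt0 card_blk t i le_pi.
rewrite !expMagn_relabel // => lo hi; split => //; apply: le_trans hi _.
rewrite !mxE -sumrB ler_sum // => j _.
by rewrite !mxE magn_relabel // mulrBr lexx.
Qed.
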